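(* Let $L$ be the graph obtained from the line graph $L(K_{5,6})$ of the complete bipartite graph $K_{5,6}$ by adding, for every edge $uv$ of $L(K_{5,6})$, a new vertex adjacent exactly to $u$ and $v$. Let $L\overline{L}$ be the disjoint union of $L$ and its complement $\overline L$. Then $L\overline{L}$ is not $\cup$-equistable, i.e., neither $L\overline{L}$ nor its complement is equistable.
   Context: A graph $G=(V,E)$ is equistable if there is $\varphi:V\to\mathbb R_+$ such that for all $S\subseteq V$, $S$ is a maximal stable set of $G$ iff $\sum_{v\in S}\varphi(v)=1$. A graph is $\cup$-equistable if it or its complement is equistable. *)

From HB Require Import structures.
From mathcomp Require Import all_boot all_order all_algebra.
From mathcomp Require Import reals.
Set Implicit Arguments. Unset Strict Implicit. Unset Printing Implicit Defensive.
Import Order.TTheory GRing.Theory Num.Theory.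

(* A simple graph on a finite type T is given by a symmetric irreflexive
   adjacency relation (all graphs below are symmetric & irreflexive by
   construction). *)

Definition stable (T : finType) (e : rel T) (S : {set T}) : bool :=
  [forall x in S, forall y in S, ~~ e x y].

Definition maximal_stable (T : finType) (e : rel T) (S : {set T}) : bool :=
  maxset (stable e) S.

Definition equistable (R : realType) (T : finType) (e : rel T) : Prop :=
  exists phi : T -> R, (forall v, 0 <= phi v)%R /\
    forall S : {set T}, maximal_stable e S <-> (\sum_(v in S) phi v = 1)%R.

Definition compl_rel (T : finType) (e : rel T) : rel T :=
  fun x y => (x != y) && ~~ e x y.

Definition cup_equistable (R : realType) (T : finType) (e : rel T) : Prop :=
  equistable R e \/ equistable R (compl_rel e).

Definition union_rel (T1 T2 : finType) (e1 : rel T1) (e2 : rel T2)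
  : rel (T1 + T2)%type :=
  fun u v => match u, v with
             | inl x, inl y => e1 x y
             | inr x, inr y => e2 x y
             | _, _ => false
             end.

(* line graph of K_{5,6}: vertices are the edges (i,j) of K_{5,6},
   i in the 5-side, j in the 6-side; two are adjacent iff distinct and
   sharing an endpoint *)
Definition LK56_V := ('I_5 * 'I_6)%type.
Definition LK56 : rel LK56_V :=
  fun x y => (x != y) && ((x.1 == y.1) || (x.2 == y.2)).

Definition is_edge_set (T : finType) (e : rel T) (A : {set T}) : bool :=
  [exists x, exists y, e x y && (A == [set x; y])].

Definition edge_type (T : finType) (e : rel T) :=
  {A : {set T} | is_edge_set e A}.

Definition ext_V (T : finType) (e : rel T) := (T + edge_type e)%type.

Definition ext_rel (T : finType) (e : rel T) : rel (ext_V e) :=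
  fun u v => match u, v with
             | inl x, inl y => e x y
             | inl x, inr A => x \in val A
             | inr A, inl x => x \in val A
             | inr _, inr _ => false
             end.

Definition L_V := ext_V LK56.
Definition L_rel : rel L_V := @ext_rel _ LK56.

Definition LLbar_V := (L_V + L_V)%type.
Definition LLbar : rel LLbar_V := union_rel L_rel (compl_rel L_rel).

From mathcomp Require Import all_boot all_order all_algebra.
From mathcomp Require Import reals.
Set Implicit Arguments. Unset Strict Implicit. Unset Printing Implicit Defensive.
Import Order.TTheory GRing.Theory Num.Theory.
Local Open Scope ring_scope.

(** The cliques of L(K_{5,6}) formed by the edges at a vertex of
    K_{5,6} (five of size 6, six of size 5) stay maximal cliques of L, since
    every added vertex misses one of their at least three members.  Each of
    them yields a maximal stable set of the disjoint union: together with a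
    fixed maximal stable set of L when it sits in the copy of the complement,
    and alone when it sits in the copy of L and we pass to the complement of
    the union.  An equistable weighting would therefore give all these
    cliques the same weight c, and counting the 30 vertices of L(K_{5,6}) by
    rows and by columns yields 5c = 6c.  Hence c = 0, which is absurd in the
    second case and, in the first, forces the fixed maximal stable set of L to
    have weight 1 on its own, although it is not maximal in the union. *)

Section Stable.

Variables (T : finType) (e : rel T).

Lemma stableP (S : {set T}) : reflect {in S &, forall x y, ~~ e x y} (stable e S).
Proof.
apply: (iffP forall_inP) => [stS x y xS | stS x xS].
  by move/forall_inP: (stS x xS); apply.
by apply/forall_inP => y; apply: stS.
Qed.

Lemma stable_maximal (S : {set T}) :
  stable e S -> (forall x, x \notin S -> exists2 y, y \in S & e x y || e y x) ->
  maximal_stable e S.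
Proof.
move=> stS dom; apply/maxsetP; split=> // B /stableP stB sSB.
apply/eqP; rewrite eqEsubset sSB andbT; apply/subsetP => x xB; apply/negPn/negP.
by move=> /dom [y /(subsetP sSB) yB]; apply/negP; rewrite negb_or !stB.
Qed.

Lemma maximal_stable_dominating (S : {set T}) x :
  irreflexive e -> maximal_stable e S -> x \notin S ->
  exists2 y, y \in S & e x y || e y x.
Proof.
move=> irr /maxsetP [/stableP stS maxS] xS.
have : ~~ stable e (x |: S).
  apply: contra xS => stxS.
  by rewrite -(maxS _ stxS (subsetUr _ _)) setU11.
case/forall_inPn => a aS /forall_inPn [b bS /negPn eab].
move: aS bS eab => /setU1P [-> | aS] /setU1P [-> | bS] eab.
- by rewrite irr in eab.
- by exists b; rewrite ?eab.
- by exists a; rewrite ?eab ?orbT.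
- by rewrite (negbTE (stS a b aS bS)) in eab.
Qed.

Lemma maximal_stable_nonempty (S : {set T}) (x : T) :
  irreflexive e -> maximal_stable e S -> exists y, y \in S.
Proof.
move=> irr maxS; have [xS | xS] := boolP (x \in S); first by exists x.
by have [y yS _] := maximal_stable_dominating irr maxS xS; exists y.
Qed.

End Stable.

Lemma compl_rel_irr (T : finType) (e : rel T) : irreflexive (compl_rel e).
Proof. by move=> x; rewrite /compl_rel eqxx. Qed.

Lemma eq_inl (A B : eqType) (x y : A) : (inl x == inl y :> A + B) = (x == y).
Proof. by apply/eqP/eqP => [[] | ->]. Qed.

Section DisjointUnion.

Variables (T1 T2 : finType) (e1 : rel T1) (e2 : rel T2).

Definition sumset (S1 : {set T1}) (S2 : {set T2}) : {set T1 + T2} :=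
  [set x | match x with inl u => u \in S1 | inr v => v \in S2 end].

Lemma big_sumset (R : nmodType) (g : T1 + T2 -> R) S1 S2 :
  \sum_(x in sumset S1 S2) g x = \sum_(u in S1) g (inl u) + \sum_(v in S2) g (inr v).
Proof. by rewrite big_sumType; congr (_ + _); apply: eq_bigl => u; rewrite inE. Qed.

Lemma union_rel_irr : irreflexive e1 -> irreflexive e2 -> irreflexive (union_rel e1 e2).
Proof. by move=> irr1 irr2 []. Qed.

Lemma compl_union_inl (u v : T1) :
  compl_rel (union_rel e1 e2) (inl u) (inl v) = compl_rel e1 u v.
Proof. by rewrite /compl_rel eq_inl. Qed.

Lemma maximal_stable_sumset S1 S2 :
  irreflexive e1 -> irreflexive e2 -> maximal_stable e1 S1 -> maximal_stable e2 S2 ->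
  maximal_stable (union_rel e1 e2) (sumset S1 S2).
Proof.
move=> irr1 irr2 max1 max2; apply: stable_maximal.
  move: (maxsetp max1) (maxsetp max2) => /stableP st1 /stableP st2.
  by apply/stableP => [] [u|u] [v|v]; rewrite !inE //=; [apply: st1 | apply: st2].
case=> [u|v]; rewrite inE.
  move=> /(maximal_stable_dominating irr1 max1) [y yS ey].
  by exists (inl y); rewrite ?inE.
move=> /(maximal_stable_dominating irr2 max2) [y yS ey].
by exists (inr y); rewrite ?inE.
Qed.

Lemma maximal_stable_sumsetr S1 S2 :
  irreflexive e1 -> irreflexive e2 ->
  maximal_stable (union_rel e1 e2) (sumset S1 S2) -> maximal_stable e2 S2.
Proof.
move=> irr1 irr2 maxS; apply: stable_maximal.
  move/stableP: (maxsetp maxS) => stS.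
  by apply/stableP => u v uS vS; apply: (stS (inr u) (inr v)); rewrite inE.
move=> v vS; have vS' : inr v \notin sumset S1 S2 by rewrite inE.
have [[u|u]] := maximal_stable_dominating (union_rel_irr irr1 irr2) maxS vS'.
  by rewrite inE.
by rewrite inE => uS euv; exists u.
Qed.

Lemma maximal_stable_compl_sumset A (x : T1) :
  maximal_stable (compl_rel e1) A ->
  maximal_stable (compl_rel (union_rel e1 e2)) (sumset A set0).
Proof.
move=> maxA; have [a aA] := maximal_stable_nonempty x (@compl_rel_irr _ e1) maxA.
apply: stable_maximal.
  move/stableP: (maxsetp maxA) => stA.
  by apply/stableP => [] [u|u] [v|v]; rewrite !inE //= compl_union_inl; apply: stA.
case=> [u|u]; rewrite inE; last by exists (inl a); rewrite ?inE.
move=> /(maximal_stable_dominating (@compl_rel_irr _ e1) maxA) [y yA cy].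
by exists (inl y); rewrite ?inE ?compl_union_inl.
Qed.

End DisjointUnion.

Lemma big_inl_imset (R : nmodType) (A B : finType) (P : {set A}) (g : A + B -> R) :
  \sum_(x in inl @: P) g x = \sum_(a in P) g (inl a).
Proof. by rewrite big_imset //= => a b _ _ []. Qed.

Section EdgeExtension.

Variables (T : finType) (e : rel T).

Lemma ext_rel_irr : irreflexive e -> irreflexive (@ext_rel _ e).
Proof. by move=> irr []. Qed.

Lemma card_edge_set (A : edge_type e) : (#|val A| <= 2)%N.
Proof.
case/existsP: (valP A) => x /existsP [y /andP [_ /eqP ->]].
by rewrite cards2; case: (_ != _).
Qed.

Lemma maximal_clique_ext (P : {set T}) :
  maximal_stable (compl_rel e) P -> (2 < #|P|)%N ->
  maximal_stable (compl_rel (@ext_rel _ e)) (inl @: P).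
Proof.
move=> maxP cardP; apply: stable_maximal.
  move/stableP: (maxsetp maxP) => stP.
  apply/stableP => _ _ /imsetP [x xP ->] /imsetP [y yP ->].
  by rewrite /compl_rel eq_inl; apply: stP.
case=> [x | A] xN.
  have xP : x \notin P by apply: contra xN => xP; apply: imset_f.
  have [y yP cxy] := maximal_stable_dominating (@compl_rel_irr _ e) maxP xP.
  by exists (inl y); rewrite ?imset_f // /compl_rel !eq_inl.
have : ~~ (P \subset val A).
  apply: contraTN cardP => /subset_leq_card/leq_trans/(_ (card_edge_set A)).
  by case: ltngtP.
case/subsetPn => y yP yA; exists (inl y); first exact: imset_f.
by rewrite /compl_rel /= yA.
Qed.

End EdgeExtension.

Lemma sum_rows_cols (R : nmodType) m n (h : 'I_m * 'I_n -> R) c :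
  (forall i, \sum_j h (i, j) = c) -> (forall j, \sum_i h (i, j) = c) ->
  c *+ m = c *+ n.
Proof.
move=> rows cols; transitivity (\sum_i \sum_j h (i, j)).
  by rewrite (eq_bigr _ (fun i _ => rows i)) sumr_const card_ord.
by rewrite exchange_big (eq_bigr _ (fun j _ => cols j)) sumr_const card_ord.
Qed.

Definition LK56_row (i : 'I_5) : {set LK56_V} := [set (i, j) | j : 'I_6].
Definition LK56_col (j : 'I_6) : {set LK56_V} := [set (i, j) | i : 'I_5].

Lemma mem_LK56_row i p : (p \in LK56_row i) = (p.1 == i).
Proof. by case: p => a b; apply/imsetP/eqP => [[j _ [-> _]] | /= ->]; last exists b. Qed.

Lemma mem_LK56_col j p : (p \in LK56_col j) = (p.2 == j).
Proof. by case: p => a b; apply/imsetP/eqP => [[i _ [_ ->]] | /= ->]; last exists a. Qed.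

Lemma card_LK56_row i : #|LK56_row i| = 6%N.
Proof. by rewrite card_imset ?card_ord // => a b []. Qed.

Lemma card_LK56_col j : #|LK56_col j| = 5%N.
Proof. by rewrite card_imset ?card_ord // => a b []. Qed.

Lemma LK56_irr : irreflexive LK56.
Proof. by move=> x; rewrite /LK56 eqxx. Qed.

Lemma exists_ord_neq n (k : 'I_n.+2) : exists j : 'I_n.+2, j != k.
Proof.
exists (if k == ord0 then ord_max else ord0).
by have [->|] := eqVneq k ord0; rewrite // eq_sym.
Qed.

Lemma maximal_clique_LK56_row i : maximal_stable (compl_rel LK56) (LK56_row i).
Proof.
apply: stable_maximal.
  apply/stableP => p q; rewrite !mem_LK56_row /compl_rel /LK56 => /eqP pi /eqP qi.
  by rewrite pi qi eqxx andbT andbN.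
move=> [a b]; rewrite mem_LK56_row /= => ai; have [j jb] := exists_ord_neq b.
exists (i, j); first by rewrite mem_LK56_row.
by rewrite /compl_rel /LK56 /= xpair_eqE (negbTE ai) eq_sym (negbTE jb).
Qed.

Lemma maximal_clique_LK56_col j : maximal_stable (compl_rel LK56) (LK56_col j).
Proof.
apply: stable_maximal.
  apply/stableP => p q; rewrite !mem_LK56_col /compl_rel /LK56 => /eqP pj /eqP qj.
  by rewrite pj qj eqxx orbT andbT andbN.
move=> [a b]; rewrite mem_LK56_col /= => bj; have [i ia] := exists_ord_neq a.
exists (i, j); first by rewrite mem_LK56_col.
by rewrite /compl_rel /LK56 /= xpair_eqE eq_sym (negbTE ia) (negbTE bj).
Qed.

Lemma LK56_clique_weight (R : zmodType) (g : LK56_V -> R) c :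
  (forall P, maximal_stable (compl_rel LK56) P -> (2 < #|P|)%N ->
     \sum_(p in P) g p = c) ->
  c = 0.
Proof.
move=> weight; have : c *+ 5 = c *+ 6.
  apply: (@sum_rows_cols _ _ _ g) => [i | j].
    rewrite -(weight _ (maximal_clique_LK56_row i)) ?card_LK56_row //.
    by rewrite big_imset //= => a b _ _ [].
  rewrite -(weight _ (maximal_clique_LK56_col j)) ?card_LK56_col //.
  by rewrite big_imset //= => a b _ _ [].
by move/(congr1 (fun x => x - c *+ 5)); rewrite subrr mulrS addrK.
Qed.

Theorem proposition40 (R : realType) :
  ~ cup_equistable R LLbar.
Proof.
have irrL : irreflexive L_rel := ext_rel_irr LK56_irr.
have irrLc := @compl_rel_irr _ L_rel.
pose v0 : L_V := inl (ord0, ord0).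
case=> [[phi [_ weight]] | [phi [_ weight]]].
- have stable0 : stable L_rel set0 by apply/stableP => u; rewrite inE.
  have [S1 maxS1 _] := maxset_exists stable0.
  pose a := \sum_(u in S1) phi (inl u).
  have a1 : 1 - a = 0.
    apply: (@LK56_clique_weight _ (fun p => phi (inr (inl p)))) => P maxP cardP.
    have maxLc := maximal_clique_ext maxP cardP.
    have /weight := maximal_stable_sumset irrL irrLc maxS1 maxLc.
    by rewrite big_sumset big_inl_imset => <-; rewrite addrAC subrr add0r.
  have /weight : \sum_(x in sumset S1 set0) phi x = 1.
    by rewrite big_sumset big_set0 addr0; apply/esym/eqP; rewrite -subr_eq0 a1.
  move=> /(maximal_stable_sumsetr irrL irrLc) /(maximal_stable_nonempty v0 irrLc) [y].
  by rewrite inE.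
- suff /eqP : (1 : R) = 0 by rewrite oner_eq0.
  apply: (@LK56_clique_weight _ (fun p => phi (inl (inl p)))) => P maxP cardP.
  have maxL := maximal_clique_ext maxP cardP.
  have /weight := maximal_stable_compl_sumset (compl_rel L_rel) v0 maxL.
  by rewrite big_sumset big_inl_imset big_set0 addr0.
Qed.
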